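(* Let $\mathcal{H}=(\mathcal{T},\mathsf{SO})$ be a history and let $\mathcal{G}$ be the hyper-polygraph of $\mathcal{H}$. Then $\mathcal{H}$ satisfies Snapshot Isolation if and only if $\mathcal{H}$ satisfies $\textsc{Int}$ and there exists a directed labeled graph compatible with $\mathcal{G}$ whose induced SI graph is acyclic.
   Context: Fix sets $\mathsf{Key}$ of keys and $\mathsf{Val}$ of values. An operation is a read $\mathsf{R}(x,v)$ or write $\mathsf{W}(x,v)$ ($x\in\mathsf{Key}$, $v\in\mathsf{Val}$, each with a unique identifier). A transaction is $(O,\mathsf{po})$ with $O$ a finite non-empty set of operations and $\mathsf{po}$ a strict total order on $O$. A history $\mathcal{H}=(\mathcal{T},\mathsf{SO})$: $\mathcal{T}$ a set of transactions with disjoint operation sets, $\mathsf{SO}$ a union of strict total orders on disjoint subsets of $\mathcal{T}$; it contains a transaction $T_\bot$ writing the initial value of every key and $\mathsf{SO}$-preceding all other transactions. $T\vdash\mathsf{W}(x,v)$: $T$ writes $x$ and its $\mathsf{po}$-last write to $x$ has value $v$. $T\vdash\mathsf{R}(x,v)$: $T$ reads $x$ before any write of $T$ to $x$ and the first such read returns $v$. $\mathsf{WriteTx}_x=\{T\mid T\vdash\mathsf{W}(x,\_)\}$. $\textsc{Int}$: in every transaction, every read of $x$ that is $\mathsf{po}$-preceded by an operation on $x$ returns the value of the $\mathsf{po}$-latest such preceding operation. Dependency graph: $(\mathcal{T},\mathsf{SO},\mathsf{WR},\mathsf{WW},\mathsf{RW})$ with, for each key $x$: $\mathsf{WR}(x)\subseteq\mathcal{T}\times\mathcal{T}$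 such that every $S$ with $S\vdash\mathsf{R}(x,\_)$ has exactly one $T$ with $(T,S)\in\mathsf{WR}(x)$, and $(T,S)\in\mathsf{WR}(x)$ implies $T\neq S$ and $T\vdash\mathsf{W}(x,v)$, $S\vdash\mathsf{R}(x,v)$ for some $v$; $\mathsf{WW}(x)$ a strict total order on $\mathsf{WriteTx}_x$; $(T,S)\in\mathsf{RW}(x)$ iff $T\neq S$ and there is $T'$ with $(T',T)\in\mathsf{WR}(x)$ and $(T',S)\in\mathsf{WW}(x)$. Snapshot Isolation is taken (following Cerone and Gotsman) as: $\mathcal{H}$ satisfies SI iff $\mathcal{H}\models\textsc{Int}$ and there is a dependency graph extending $\mathcal{H}$ such that $(\mathsf{SO}\cup\mathsf{WR}\cup\mathsf{WW})\,;\,\mathsf{RW}^{?}$ is acyclic, where $\mathsf{WR},\mathsf{WW},\mathsf{RW}$ denote unions over keys, $;$ is relational composition and $R^{?}$ is the reflexive closure. Hyper-polygraph of $\mathcal{H}$: $\mathcal{G}=(\mathcal{V},\mathcal{E},(\mathcal{C}^{\mathsf{WW}},\mathcal{C}^{\mathsf{WR}}))$, $\mathcal{V}=\mathcal{T}$; edges $T\xrightarrow{\mathsf{t}(x)}S$ with type $\mathsf{t}\in\{\mathsf{SO},\mathsf{WR},\mathsf{WW},\mathsf{RW}\}$ and key $x$; $\mathcal{E}$ contains $T\xrightarrow{\mathsf{SO}}S$ for $(T,S)\in\mathsf{SO}$ and $T\xrightarrow{\mathsf{WR}(x)}S$ whenever $S\vdash\mathsf{R}(x,v)$ and $T$ is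 the unique transaction with $T\vdash\mathsf{W}(x,v)$; $\mathcal{C}^{\mathsf{WW}}=\{\{T\xrightarrow{\mathsf{WW}(x)}S,S\xrightarrow{\mathsf{WW}(x)}T\}\mid T\neq S\in\mathsf{WriteTx}_x\}$; $\mathcal{C}^{\mathsf{WR}}=\{\{T_i\xrightarrow{\mathsf{WR}(x)}S\mid T_i\vdash\mathsf{W}(x,v)\}\mid S\vdash\mathsf{R}(x,v)\}$. A graph $(\mathcal{V}',\mathcal{E}')$ is compatible with $\mathcal{G}$ if $\mathcal{V}'=\mathcal{V}$, $\mathcal{E}'\supseteq\mathcal{E}$, for all $x$ and $T,T',S$ with $T\neq S$: $T'\xrightarrow{\mathsf{WR}(x)}T\in\mathcal{E}'$ and $T'\xrightarrow{\mathsf{WW}(x)}S\in\mathcal{E}'$ imply $T\xrightarrow{\mathsf{RW}(x)}S\in\mathcal{E}'$, and $|\mathcal{E}'\cap C|=1$ for every $C\in\mathcal{C}^{\mathsf{WW}}\cup\mathcal{C}^{\mathsf{WR}}$. For such a graph, writing $\mathcal{E}'_{\mathsf{t}}\subseteq\mathcal{V}'\times\mathcal{V}'$ for the vertex pairs joined by an edge of type $\mathsf{t}$ (ignoring keys), its induced SI graph is $(\mathcal{V}',(\mathcal{E}'_{\mathsf{SO}}\cup\mathcal{E}'_{\mathsf{WR}}\cup\mathcal{E}'_{\mathsf{WW}})\,;\,\mathcal{E}'^{?}_{\mathsf{RW}})$. Acyclic means no directed cycle (including self-loops). *)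

From Stdlib Require Import List Relations.
Import ListNotations.
Set Implicit Arguments.

Section Defs.
Variables (Key Val : Type).

Inductive op_kind := OpR | OpW.
Record Op := mkOp { okind : op_kind; okey : Key; oval : Val; oid : nat }.

Variable Tx : Type.
(** A transaction T is given by the list [ops T] of its operations, listed in
    program order po (list order is the strict total order po). *)
Variable ops : Tx -> list Op.

(** T |- W(x,v): T writes x and its po-last write to x has value v. *)
Definition writes (T : Tx) (x : Key) (v : Val) : Prop :=
  exists l1 o l2, ops T = l1 ++ o :: l2 /\ okind o = OpW /\ okey o = x /\
    oval o = v /\ (forall o', In o' l2 -> ~ (okind o' = OpW /\ okey o' = x)).

(** T |- R(x,v): T reads x before any write of T to x, and the first such read
    returns v (i.e. the po-first operation of T on x is a read returning v). *)
Definition reads (T : Tx) (x : Key) (v : Val) : Prop :=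
  exists l1 o l2, ops T = l1 ++ o :: l2 /\ okind o = OpR /\ okey o = x /\
    oval o = v /\ (forall o', In o' l1 -> okey o' <> x).

Definition WriteTx (x : Key) (T : Tx) : Prop := exists v, writes T x v.

(** INT: every read of x po-preceded by an operation on x returns the value of
    the po-latest such preceding operation. *)
Definition Int : Prop :=
  forall T l1 p l2 o l3, ops T = l1 ++ p :: l2 ++ o :: l3 ->
    okind o = OpR -> okey p = okey o ->
    (forall q, In q l2 -> okey q <> okey o) ->
    oval o = oval p.

Definition strict_total_order_on (D : Tx -> Prop) (R : Tx -> Tx -> Prop) : Prop :=
  (forall T S, R T S -> D T /\ D S) /\
  (forall T, ~ R T T) /\
  (forall T S U, R T S -> R S U -> R T U) /\
  (forall T S, D T -> D S -> T <> S -> R T S \/ R S T).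

Definition is_history (SO : Tx -> Tx -> Prop) (Tbot : Tx) : Prop :=
  (* transactions: finite non-empty sets of operations with po *)
  (forall T, ops T <> [] /\ NoDup (ops T)) /\
  (forall T S o, T <> S -> In o (ops T) -> ~ In o (ops S)) /\
  (forall x, exists v, writes Tbot x v) /\
  (exists (I : Type) (D : I -> Tx -> Prop) (R : I -> Tx -> Tx -> Prop),
     (forall i j T, D i T -> D j T -> i = j) /\
     (forall i, ~ D i Tbot) /\
     (forall i, strict_total_order_on (D i) (R i)) /\
     (forall T S, SO T S <-> ((T = Tbot /\ S <> Tbot) \/ exists i, R i T S))).

Definition acyclic (R : Tx -> Tx -> Prop) : Prop :=
  forall T, ~ clos_trans Tx R T T.
Definition rcomp (R1 R2 : Tx -> Tx -> Prop) : Tx -> Tx -> Prop :=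
  fun T S => exists U, R1 T U /\ R2 U S.
Definition refl_clos (R : Tx -> Tx -> Prop) : Tx -> Tx -> Prop :=
  fun T S => T = S \/ R T S.
Definition runion (R1 R2 : Tx -> Tx -> Prop) : Tx -> Tx -> Prop :=
  fun T S => R1 T S \/ R2 T S.

Definition RW_of (WR WW : Key -> Tx -> Tx -> Prop) (x : Key) : Tx -> Tx -> Prop :=
  fun T S => T <> S /\ exists T', WR x T' T /\ WW x T' S.

Definition is_dep_graph (WR WW : Key -> Tx -> Tx -> Prop) : Prop :=
  (forall x S, (exists v, reads S x v) ->
     exists T, WR x T S /\ forall T', WR x T' S -> T' = T) /\
  (forall x T S, WR x T S -> T <> S /\ exists v, writes T x v /\ reads S x v) /\
  (forall x, strict_total_order_on (WriteTx x) (WW x)).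

Definition union_keys (R : Key -> Tx -> Tx -> Prop) : Tx -> Tx -> Prop :=
  fun T S => exists x, R x T S.

Definition satisfies_SI (SO : Tx -> Tx -> Prop) : Prop :=
  Int /\
  exists WR WW, is_dep_graph WR WW /\
    acyclic (rcomp (runion SO (runion (union_keys WR) (union_keys WW)))
                   (refl_clos (union_keys (RW_of WR WW)))).

Inductive label := LSO | LWR (x : Key) | LWW (x : Key) | LRW (x : Key).
Inductive etype := TSO | TWR | TWW | TRW.
Definition ltype (l : label) : etype :=
  match l with LSO => TSO | LWR _ => TWR | LWW _ => TWW | LRW _ => TRW end.
Definition edge : Type := (Tx * label * Tx)%type.

(** Hyper-polygraph (V, E, (C^WW, C^WR)); the vertex set V is all of Tx. *)
Record hyper_polygraph := {
  hp_E : edge -> Prop;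
  hp_CWW : (edge -> Prop) -> Prop;
  hp_CWR : (edge -> Prop) -> Prop }.

Definition hyper_polygraph_of (SO : Tx -> Tx -> Prop) : hyper_polygraph := {|
  hp_E := fun e =>
    (exists T S, e = (T, LSO, S) /\ SO T S) \/
    (exists x T S v, e = (T, LWR x, S) /\ reads S x v /\ writes T x v /\
       (forall T', writes T' x v -> T' = T));
  hp_CWW := fun C => exists x T S, T <> S /\ WriteTx x T /\ WriteTx x S /\
    (forall e, C e <-> (e = (T, LWW x, S) \/ e = (S, LWW x, T)));
  hp_CWR := fun C => exists x S v, reads S x v /\
    (forall e, C e <-> exists Ti, writes Ti x v /\ e = (Ti, LWR x, S)) |}.

(** A labeled graph (V', E') with V' = Tx, given by its edge set E',
    compatible with G. *)
Definition compatible (G : hyper_polygraph) (E' : edge -> Prop) : Prop :=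
  (forall e, hp_E G e -> E' e) /\
  (forall x T T' S, T <> S -> E' (T', LWR x, T) -> E' (T', LWW x, S) ->
     E' (T, LRW x, S)) /\
  (forall C, hp_CWW G C \/ hp_CWR G C ->
     exists e, (E' e /\ C e) /\ forall e', E' e' /\ C e' -> e' = e).

Definition edges_of_type (E' : edge -> Prop) (t : etype) : Tx -> Tx -> Prop :=
  fun T S => exists l, ltype l = t /\ E' (T, l, S).

Definition induced_SI (E' : edge -> Prop) : Tx -> Tx -> Prop :=
  rcomp (runion (edges_of_type E' TSO)
           (runion (edges_of_type E' TWR) (edges_of_type E' TWW)))
        (refl_clos (edges_of_type E' TRW)).

End Defs.

(* A dependency graph (WR, WW) and a graph compatible with the hyper-polygraph
   carry the same information.  From (WR, WW) one takes the edges SO, WR(x),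
   WW(x) and the derived RW(x); conversely WR and WW are read off the WR- and
   WW-labelled edges.  Picking exactly one edge of each WR hyperedge says that
   every read has exactly one writer, and picking exactly one edge of each WW
   pair says that WW(x) is total on the writers of x.  WW(x) is moreover
   irreflexive and transitive because every non-RW edge is itself an edge of
   the induced SI graph (RW^? is reflexive), so a WW self-loop or a WW
   triangle would be an SI cycle.  In both directions the SI relation of the
   dependency graph and the induced SI graph are contained in each other, so
   acyclicity transfers. *)
From Stdlib Require Import List Relations Classical.

Lemma first_occurrence_unique {A K : Type} (k : A -> K) (x : K)
  {l1 m1 l2 m2 : list A} {o p : A} :
  l1 ++ o :: l2 = m1 ++ p :: m2 -> k o = x -> k p = x ->
  (forall q, In q l1 -> k q <> x) -> (forall q, In q m1 -> k q <> x) -> o = p.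
Proof.
  revert m1; induction l1 as [|a l1 IH]; intros [|b m1] E ho hp h1 h2;
    simpl in E; injection E as E1 E2; auto.
  - exfalso; apply (h2 b); simpl; auto; congruence.
  - exfalso; apply (h1 a); simpl; auto; congruence.
  - eapply IH; eauto; intros q hq; [apply h1|apply h2]; simpl; auto.
Qed.

Lemma acyclic_incl (Tx : Type) (R R' : Tx -> Tx -> Prop) :
  inclusion Tx R R' -> acyclic R' -> acyclic R.
Proof.
  intros HRR' Hac T Hcyc; apply (Hac T).
  assert (Hlift : inclusion Tx (clos_trans Tx R) (clos_trans Tx R')).
  { intros a b Hab; induction Hab; [apply t_step, HRR'|eapply t_trans]; eauto. }
  exact (Hlift T T Hcyc).
Qed.

Lemma strict_total_order_asym (Tx : Type) (D : Tx -> Prop) R T S :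
  strict_total_order_on D R -> R T S -> ~ R S T.
Proof. intros (_ & irr & tr & _) hTS hST; apply (irr T); eauto. Qed.

Section SnapshotIsolation.
Variables (Key Val Tx : Type) (ops : Tx -> list (Op Key Val)).
Variable SO : Tx -> Tx -> Prop.

Lemma reads_functional {S x v v'} :
  reads ops S x v -> reads ops S x v' -> v = v'.
Proof.
  intros (l1 & o & l2 & E1 & _ & ho & <- & h1) (m1 & p & m2 & E2 & _ & hp & <- & h2).
  rewrite E1 in E2.
  now rewrite (first_occurrence_unique (@okey Key Val) x E2 ho hp h1 h2).
Qed.

Definition SI_rel (WR WW : Key -> Tx -> Tx -> Prop) : Tx -> Tx -> Prop :=
  rcomp (runion SO (runion (union_keys WR) (union_keys WW)))
        (refl_clos (union_keys (RW_of WR WW))).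

Lemma induced_SI_edge (E' : edge Key Tx -> Prop) T l S :
  E' (T, l, S) -> ltype l <> TRW -> induced_SI E' T S.
Proof.
  intros HE Hl; exists S; split; [|left; reflexivity].
  destruct l; simpl in Hl; [left|right; left|right; right|congruence];
    (eexists; split; [|exact HE]; reflexivity).
Qed.

Definition graph_of_dep (WR WW : Key -> Tx -> Tx -> Prop) (e : edge Key Tx) : Prop :=
  match e with
  | (src, LSO _, dst) => SO src dst
  | (src, LWR x, dst) => WR x src dst
  | (src, LWW x, dst) => WW x src dst
  | (src, LRW x, dst) => RW_of WR WW x src dst
  end.

Lemma dep_graph_WR_writes {WR WW x T S v} :
  is_dep_graph ops WR WW -> reads ops S x v -> WR x T S -> writes ops T x v.
Proof.
  intros (_ & HWR & _) Hr HT.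
  destruct (HWR _ _ _ HT) as (_ & v' & Hw & Hr').
  now rewrite (reads_functional Hr Hr').
Qed.

Lemma graph_of_dep_compatible WR WW :
  is_dep_graph ops WR WW ->
  compatible (hyper_polygraph_of ops SO) (graph_of_dep WR WW).
Proof.
  intros HD; pose proof HD as (HWR1 & _ & HWW).
  split; [|split].
  - intros e [(T & S & -> & H)|(x & T & S & v & -> & Hr & Hw & Huniq)]; [exact H|].
    destruct (HWR1 x S (ex_intro _ v Hr)) as (T0 & HT0 & _).
    now rewrite <- (Huniq _ (dep_graph_WR_writes HD Hr HT0)).
  - intros x T T' S HTS h1 h2; split; eauto.
  - intros C [(x & T & S & HTS & WT & WS & HC)|(x & S & v & Hr & HC)].
    + pose proof (HWW x) as (_ & _ & _ & Htot).
      destruct (Htot T S WT WS HTS) as [h|h]; [exists (T, LWW x, S)|exists (S, LWW x, T)];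
        (split; [split; [exact h|apply HC; auto]|]);
        intros e' (He & Ce); apply HC in Ce as [->| ->]; auto;
        exfalso; eapply strict_total_order_asym; eauto.
    + destruct (HWR1 x S (ex_intro _ v Hr)) as (T0 & HT0 & Huniq).
      exists (T0, LWR x, S); split.
      * split; [exact HT0|apply HC; eauto using dep_graph_WR_writes].
      * intros e' (He & Ce); apply HC in Ce as (Ti & _ & ->).
        now rewrite (Huniq _ He).
Qed.

Lemma induced_SI_graph_of_dep WR WW :
  inclusion Tx (induced_SI (graph_of_dep WR WW)) (SI_rel WR WW).
Proof.
  intros T S (U & hTU & hUS); exists U; split.
  - destruct hTU as [(l & Hl & h)|[(l & Hl & h)|(l & Hl & h)]];
      destruct l; simpl in Hl; try discriminate;
      [left|right; left|right; right]; eauto; exists x; exact h.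
  - destruct hUS as [h|(l & Hl & h)]; [left; exact h|right].
    destruct l; simpl in Hl; try discriminate; exists x; exact h.
Qed.

Section CompatibleGraph.
Variable E' : edge Key Tx -> Prop.
Hypothesis HE' : compatible (hyper_polygraph_of ops SO) E'.
Hypothesis Hacyc : acyclic (induced_SI E').

Definition WR_of_graph (x : Key) (T S : Tx) : Prop :=
  E' (T, LWR x, S) /\ exists v, writes ops T x v /\ reads ops S x v.

Definition WW_of_graph (x : Key) (T S : Tx) : Prop :=
  E' (T, LWW x, S) /\ WriteTx ops x T /\ WriteTx ops x S.

Lemma compatible_no_self_loop T l : ltype l <> TRW -> ~ E' (T, l, T).
Proof. intros Hl HE; apply (Hacyc T), t_step; eapply induced_SI_edge; eauto. Qed.

Lemma compatible_WW_total x {T S} :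
  T <> S -> WriteTx ops x T -> WriteTx ops x S ->
  E' (T, LWW x, S) \/ E' (S, LWW x, T).
Proof.
  intros HTS WT WS; destruct HE' as (_ & _ & Hchoice).
  destruct (Hchoice (fun e => e = (T, LWW x, S) \/ e = (S, LWW x, T)))
    as (e & (He & [->| ->]) & _); auto.
  left; exists x, T, S; repeat split; auto.
Qed.

Lemma compatible_WR_unique_writer x S v :
  reads ops S x v -> exists T, WR_of_graph x T S /\ forall T', WR_of_graph x T' S -> T' = T.
Proof.
  intros Hr; destruct HE' as (_ & _ & Hchoice).
  destruct (Hchoice (fun e => exists Ti, writes ops Ti x v /\ e = (Ti, LWR x, S)))
    as (e & (He & Ti & Hw & ->) & Huniq).
  { right; exists x, S, v; split; [exact Hr|tauto]. }
  exists Ti; split; [split; eauto|].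
  intros T' (HE & v' & Hw' & Hr').
  rewrite <- (reads_functional Hr Hr') in Hw'.
  assert (Heq : (T', LWR x, S) = (Ti, LWR x, S)) by (apply Huniq; eauto).
  now injection Heq.
Qed.

Lemma WW_of_graph_trans x T S U :
  WW_of_graph x T S -> WW_of_graph x S U -> WW_of_graph x T U.
Proof.
  intros (hTS & wT & _) (hSU & _ & wU); split; [|auto].
  assert (iTS : induced_SI E' T S) by (eapply induced_SI_edge; eauto; discriminate).
  assert (iSU : induced_SI E' S U) by (eapply induced_SI_edge; eauto; discriminate).
  destruct (classic (T = U)) as [<-|nTU].
  - exfalso; apply (Hacyc T); eapply t_trans; apply t_step; eauto.
  - destruct (compatible_WW_total x nTU wT wU) as [h|hUT]; [exact h|].
    exfalso; apply (Hacyc T); eapply t_trans; [apply t_step, iTS|].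
    eapply t_trans; apply t_step; [exact iSU|].
    eapply induced_SI_edge; eauto; discriminate.
Qed.

Lemma dep_graph_of_compatible : is_dep_graph ops WR_of_graph WW_of_graph.
Proof.
  split; [|split].
  - intros x S (v & Hr); eapply compatible_WR_unique_writer; eauto.
  - intros x T S (HE & v & Hw & Hr); split; eauto.
    intros <-; eapply compatible_no_self_loop; eauto; discriminate.
  - intros x; split; [|split; [|split]].
    + intros T S (_ & wT & wS); auto.
    + intros T (HE & _); eapply compatible_no_self_loop; eauto; discriminate.
    + apply WW_of_graph_trans.
    + intros T S wT wS HTS.
      destruct (compatible_WW_total x HTS wT wS); [left|right]; repeat split; auto.
Qed.

Lemma SI_rel_of_compatible :
  inclusion Tx (SI_rel WR_of_graph WW_of_graph) (induced_SI E').
Proof.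
  destruct HE' as (Hbase & HRW & _).
  intros T S (U & hTU & hUS); exists U; split.
  - destruct hTU as [h|[(x & h & _)|(x & h & _)]].
    + left; exists (LSO Key); split; [reflexivity|]; apply Hbase; left; eauto.
    + right; left; exists (LWR x); eauto.
    + right; right; exists (LWW x); eauto.
  - destruct hUS as [h|(x & HUS & T' & (g1 & _) & (g2 & _))]; [left; exact h|right].
    exists (LRW x); split; [reflexivity|]; eapply HRW; eauto.
Qed.

End CompatibleGraph.

Lemma SI_iff_compatible_graph :
  satisfies_SI ops SO <->
  Int ops /\ exists E', compatible (hyper_polygraph_of ops SO) E' /\ acyclic (induced_SI E').
Proof.
  split.
  - intros (HI & WR & WW & HD & Hac); split; [exact HI|].
    exists (graph_of_dep WR WW); split.
    + now apply graph_of_dep_compatible.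
    + eapply acyclic_incl; [apply induced_SI_graph_of_dep|exact Hac].
  - intros (HI & E' & HE' & Hac); split; [exact HI|].
    exists (WR_of_graph E'), (WW_of_graph E'); split.
    + now apply dep_graph_of_compatible.
    + eapply acyclic_incl; [apply SI_rel_of_compatible|]; assumption.
Qed.

End SnapshotIsolation.

(* The equivalence holds for any relation SO. *)
Theorem theoremA2 (Key Val Tx : Type) (ops : Tx -> list (Op Key Val))
  (SO : Tx -> Tx -> Prop) (Tbot : Tx) :
  is_history ops SO Tbot ->
  (satisfies_SI ops SO <->
   Int ops /\
   exists E' : edge Key Tx -> Prop,
     compatible (hyper_polygraph_of ops SO) E' /\ acyclic (induced_SI E')).
Proof. intros _; apply SI_iff_compatible_graph. Qed.
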